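(* Let $G$ be a graph and $v$ a vertex of $G$ with degree $d_v$ in $G$. Let $G+c$ be the graph obtained by attaching to $G$ a new cycle $c$ of length $s_c\geq 3$ which shares only the vertex $v$ with $G$ (all its other vertices and edges are new). Then: (1) If $d_w\geq 2$ for every neighbor $w$ of $v$ in $G$, then \[R(G+c)-R(G)\geq \frac{\sqrt{d_v+2}-\sqrt{d_v}}{\sqrt 2}+\frac{s_c-2}{2},\] with equality if all these $d_w=2$. (2) If $d_v\geq 2$ and $d_w\leq d_v+2$ for every neighbor $w$ of $v$ in $G$, then \[R(G+c)-R(G)\leq \frac{s_c-1}{2},\] with equality if and only if $d_v=2$ and all these $d_w=4$. (3) If $d_v=1$ and the unique neighbor $w$ of $v$ satisfies $2\leq d_w\leq 3$, then \[R(G+c)-R(G)<\frac{s_c-1}{2}+0.075.\]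
   Context: Graphs are finite and simple; degrees $d_w$ refer to degrees in $G$. The Randi\'c index of a graph $H$ is $R(H)=\sum_{uv\in E(H)}\frac{1}{\sqrt{d_ud_v}}$, where degrees are taken in $H$. *)

From mathcomp Require Import all_boot all_order all_algebra.
Set Implicit Arguments. Unset Strict Implicit. Unset Printing Implicit Defensive.
Import Order.TTheory GRing.Theory Num.Theory.
Local Open Scope ring_scope.

Definition simple_graph (T : finType) (e : rel T) : Prop :=
  irreflexive e /\ symmetric e.

Definition deg (T : finType) (e : rel T) (x : T) : nat := #|[set y | e x y]|.

(* Randic index: sum over edges {x,y} of 1/sqrt(d_x d_y); each unordered edge
   is counted twice in the ordered double sum, hence the factor 1/2. *)
Definition randic (R : rcfType) (T : finType) (e : rel T) : R :=
  2^-1 * \sum_(x : T) \sum_(y : T | e x y)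
           (Num.sqrt ((deg e x)%:R * (deg e y)%:R))^-1.

(* G + c : attach to G a new cycle of length s through v.  The new vertices
   are inr 0, ..., inr (s-2) (there are s-1 of them); the cycle is
   v - inr 0 - inr 1 - ... - inr (s-2) - v. *)
Definition add_cycle (T : finType) (e : rel T) (v : T) (s : nat)
  : rel (T + 'I_s.-1)%type :=
  fun a b =>
    match a, b with
    | inl x, inl y => e x y
    | inl x, inr i => (x == v) && ((val i == 0%N) || (val i == s.-2))
    | inr i, inl x => (x == v) && ((val i == 0%N) || (val i == s.-2))
    | inr i, inr j => ((val i).+1 == val j) || ((val j).+1 == val i)
    end.
Arguments add_cycle {T} e v s _ _.
Arguments randic R {T} e.
Arguments deg {T} e x.

(* Attaching c raises the degree of v by 2 and leaves every other old degree
   unchanged, so among the old edges only those at v change weight; the two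
   cycle edges at v weigh 1/sqrt(2(d_v+2)) each and the other s_c - 2 cycle
   edges 1/2 each.  Hence
     R(G+c) - R(G) = (s_c-2)/2 + 2/sqrt(2(d_v+2))
                     + ((d_v+2)^(-1/2) - d_v^(-1/2)) * sum_(w ~ v) d_w^(-1/2).
   The coefficient of the sum is negative, so the difference is monotone in
   every d_w and is extremal when all d_w equal the bounding value q, where it
   is (s_c-2)/2 + cycle_gain d_v q.  For q = 2 this is the bound of (1); for
   q = d+2,
     (d+2) (1/2 - cycle_gain d (d+2)) = (sqrt d - sqrt 2) (2 sqrt(d+2) - sqrt d - sqrt 2) / 2,
   which is nonnegative for d >= 2 and vanishes only at d = 2, giving (2), and
   is about -0.217 for d = 1, giving (3). *)

From mathcomp Require Import all_boot all_order all_algebra.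
From mathcomp Require Import zify ring lra.
Import Order.TTheory GRing.Theory Num.Theory.

Set Implicit Arguments. Unset Strict Implicit. Unset Printing Implicit Defensive.

Lemma deg_sum (T : finType) (e : rel T) x : deg e x = (\sum_y (e x y : nat))%N.
Proof.
rewrite /deg -sum1_card big_mkcond /=; apply: eq_bigr => y _.
by rewrite inE; case: (e x y).
Qed.

Lemma card_deg (T : finType) (e : rel T) x : #|e x| = deg e x.
Proof. by apply: eq_card => y; rewrite inE. Qed.

Lemma deg_gt0 (T : finType) (e : rel T) x y : symmetric e -> e x y -> (0 < deg e y)%N.
Proof. by move=> sym_e exy; apply/card_gt0P; exists x; rewrite inE sym_e. Qed.

Lemma sum_ord_eq m k : (\sum_(j : 'I_m) (val j == k : nat))%N = (k < m)%N.
Proof.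
case: (ltnP k m) => [lt_km | le_mk].
  rewrite (bigD1 (Ordinal lt_km)) //= eqxx big1 // => j ne_jk.
  by case: eqP => // eq_jk; case/eqP: ne_jk; apply: val_inj.
by rewrite big1 // => j _; case: eqP => // eq_jk; have := ltn_ord j; rewrite eq_jk ltnNge le_mk.
Qed.

Section AddCycleDegrees.
Variables (T : finType) (e : rel T) (v : T) (n : nat).
Local Notation E := (add_cycle e v n.+3).

Definition cycle_end (i : 'I_n.+2) : bool := (val i == 0%N) || (val i == n.+1).

Definition cycle_adj (i j : 'I_n.+2) : bool :=
  ((val i).+1 == val j) || ((val j).+1 == val i).

Lemma add_cycle_sym : symmetric e -> symmetric E.
Proof. by move=> sym_e [x|i] [y|j] //=; rewrite ?sym_e // orbC. Qed.

Lemma sum_cycle_end : (\sum_i (cycle_end i : nat))%N = 2.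
Proof.
rewrite (eq_bigr (fun i : 'I_n.+2 => (val i == 0%N) + (val i == n.+1))%N).
  by rewrite big_split /= !sum_ord_eq ltnS leqnn.
by case=> [[|k] lt_k] _; rewrite /cycle_end /= ?addn0.
Qed.

Lemma sum_cycle_adj_row i :
  (\sum_j (cycle_adj i j : nat))%N = ((val i).+1 < n.+2)%N + (0 < val i)%N.
Proof.
rewrite (eq_bigr (fun j : 'I_n.+2 =>
    (val j == (val i).+1) + ((val j == (val i).-1) && (0 < val i)%N))%N); last first.
  case=> j lt_j _; rewrite /cycle_adj /=.
  by case: i => [[|k] lt_k] /=; do ![case: eqP => ? /=]; lia.
rewrite big_split /= sum_ord_eq; congr addn.
case: i => [[|k] lt_k] /=; first by rewrite big1 // => j _; rewrite andbF.
by under eq_bigr do rewrite andbT; rewrite sum_ord_eq ltnW.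
Qed.

Lemma cycle_end_add_adj i : (cycle_end i + \sum_j (cycle_adj i j : nat))%N = 2.
Proof. by rewrite sum_cycle_adj_row /cycle_end; case: i => [[|k] lt_k] /=; lia. Qed.

Lemma sum_cycle_adj : (\sum_i \sum_j (cycle_adj i j : nat))%N = (2 * n.+1)%N.
Proof.
have : (\sum_(i : 'I_n.+2) (cycle_end i + \sum_j (cycle_adj i j : nat)))%N = (n.+2 * 2)%N.
  by rewrite (eq_bigr _ (fun i _ => cycle_end_add_adj i)) sum_nat_const card_ord.
by rewrite big_split /= sum_cycle_end; lia.
Qed.

Lemma deg_add_cycle_inl x : deg E (inl x) = (deg e x + (if x == v then 2 else 0))%N.
Proof.
rewrite deg_sum big_sumType /= -deg_sum; congr addn.
by case: eqP => _ /=; [rewrite -sum_cycle_end | rewrite big1].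
Qed.

Lemma deg_add_cycle_inr i : deg E (inr i) = 2.
Proof.
rewrite deg_sum big_sumType /= -(cycle_end_add_adj i); congr addn.
by rewrite (bigD1 v) //= eqxx big1 ?addn0 // => x /negbTE ->.
Qed.

End AddCycleDegrees.

Local Open Scope ring_scope.

Section DoubleSums.
Variable R : numDomainType.

Lemma sum_sum_sumType_sym (A B : finType) (h : A + B -> A + B -> R) :
  (forall x y, h x y = h y x) ->
  \sum_x \sum_y h x y = \sum_a \sum_a' h (inl a) (inl a')
    + 2 * \sum_a \sum_b h (inl a) (inr b) + \sum_b \sum_b' h (inr b) (inr b').
Proof.
move=> h_sym; rewrite big_sumType /=.
under eq_bigr do rewrite big_sumType /=.
under [X in _ + X]eq_bigr do rewrite big_sumType /=.
rewrite !big_split /= [\sum_b \sum_a h (inr b) (inl a)]exchange_big /=.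
under [\sum_a \sum_b h (inr b) (inl a)]eq_bigr do under eq_bigr do rewrite h_sym.
by rewrite mulr_natl mulr2n !addrA.
Qed.

Lemma sum_sum_star (I : finType) (w : I) (h : I -> I -> R) :
  (forall x y, h x y = h y x) -> h w w = 0 ->
  (forall x y, x != w -> y != w -> h x y = 0) ->
  \sum_x \sum_y h x y = 2 * \sum_y h w y.
Proof.
move=> h_sym h_ww h_off; rewrite (bigD1 w) //= mulr_natl mulr2n; congr (_ + _).
rewrite [RHS](bigD1 w) //= h_ww add0r; apply: eq_bigr => x x_w.
rewrite (bigD1 w) //= big1 ?addr0 => [|y y_w]; first exact: h_sym.
exact: h_off.
Qed.

End DoubleSums.

Section RandicAddCycle.
Variable R : rcfType.

Definition randic_term (T : finType) (e : rel T) (x y : T) : R :=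
  if e x y then (Num.sqrt ((deg e x)%:R * (deg e y)%:R))^-1 else 0.

Lemma randicE (T : finType) (e : rel T) :
  randic R e = 2^-1 * \sum_x \sum_y randic_term e x y.
Proof. by congr (_ * _); apply: eq_bigr => x _; rewrite big_mkcond. Qed.

Lemma randic_term_sym (T : finType) (e : rel T) :
  symmetric e -> forall x y, randic_term e x y = randic_term e y x.
Proof. by move=> sym_e x y; rewrite /randic_term sym_e mulrC. Qed.

Variables (T : finType) (e : rel T) (v : T) (n : nat).
Hypothesis simple_e : simple_graph e.
Local Notation E := (add_cycle e v n.+3).
Let d : R := (deg e v)%:R.

Lemma randic_term_inl_inl :
  \sum_x \sum_y randic_term E (inl x) (inl y) - \sum_x \sum_y randic_term e x y =
  2 * \sum_(w | e v w)
        ((Num.sqrt ((d + 2) * (deg e w)%:R))^-1 - (Num.sqrt (d * (deg e w)%:R))^-1).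
Proof.
have [irr_e sym_e] := simple_e.
rewrite -sumrB; under eq_bigr do rewrite -sumrB.
rewrite (@sum_sum_star _ _ v); last 3 first.
- move=> x y; rewrite (randic_term_sym (@add_cycle_sym _ e v n sym_e)).
  by rewrite (randic_term_sym sym_e).
- by rewrite /randic_term /= irr_e subrr.
- move=> x y x_v y_v; rewrite /randic_term /=; case: (e x y); last by rewrite subrr.
  by rewrite !deg_add_cycle_inl (negbTE x_v) (negbTE y_v) !addn0 subrr.
congr (_ * _); rewrite [RHS]big_mkcond; apply: eq_bigr => w _.
rewrite /randic_term /=; case: ifP => [vw|_]; last by rewrite subrr.
have w_v : w != v by apply: contraTneq vw => ->; rewrite irr_e.
by rewrite !deg_add_cycle_inl eqxx (negbTE w_v) addn0 natrD.
Qed.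

Lemma randic_term_inl_inr :
  \sum_x \sum_i randic_term E (inl x) (inr i) = 2 * (Num.sqrt ((d + 2) * 2))^-1.
Proof.
rewrite (bigD1 v) //= [X in _ + X]big1 ?addr0 => [|x x_v]; last first.
  by apply: big1 => i _; rewrite /randic_term /= (negbTE x_v).
transitivity (\sum_(i : 'I_n.+2) ((cycle_end i : nat)%:R * (Num.sqrt ((d + 2) * 2))^-1)).
  apply: eq_bigr => i _; rewrite /randic_term /= eqxx /= -/(cycle_end i).
  case: (cycle_end i); rewrite ?mul1r ?mul0r //.
  by rewrite deg_add_cycle_inl deg_add_cycle_inr eqxx natrD.
by rewrite -mulr_suml -natr_sum sum_cycle_end.
Qed.

Lemma randic_term_inr_inr :
  \sum_i \sum_j randic_term E (inr i) (inr j) = n.+1%:R.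
Proof.
transitivity (\sum_(i : 'I_n.+2) \sum_j ((cycle_adj i j : nat)%:R * 2^-1 : R)).
  apply: eq_bigr => i _; apply: eq_bigr => j _.
  rewrite /randic_term /= -/(cycle_adj i j) !deg_add_cycle_inr -expr2 sqrtr_sqr.
  by case: (cycle_adj i j); rewrite ?mul1r ?mul0r ?normr_nat.
under eq_bigr do rewrite -mulr_suml -natr_sum.
rewrite -mulr_suml -natr_sum sum_cycle_adj natrM; lra.
Qed.

Lemma randic_add_cycleE :
  randic R E - randic R e =
  ((Num.sqrt (d + 2))^-1 - (Num.sqrt d)^-1) * \sum_(w | e v w) (Num.sqrt (deg e w)%:R)^-1
  + 2 / (Num.sqrt (d + 2) * Num.sqrt 2) + n.+1%:R / 2.
Proof.
have [_ sym_e] := simple_e.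
rewrite !randicE (sum_sum_sumType_sym (randic_term_sym (@add_cycle_sym _ e v n sym_e))).
rewrite randic_term_inl_inr randic_term_inr_inr.
have d_ge0 : 0 <= d + 2 by rewrite addr_ge0 ?ler0n.
have factor w : (Num.sqrt ((d + 2) * (deg e w)%:R))^-1 - (Num.sqrt (d * (deg e w)%:R))^-1
                = ((Num.sqrt (d + 2))^-1 - (Num.sqrt d)^-1) * (Num.sqrt (deg e w)%:R)^-1.
  by rewrite !sqrtrM ?ler0n // !invfM -mulrBl.
have := randic_term_inl_inl; rewrite (eq_bigr _ (fun w _ => factor w)) -mulr_sumr.
rewrite sqrtrM // invfM; lra.
Qed.

End RandicAddCycle.

Section CycleGain.
Variable R : rcfType.

Definition cycle_gain (d q : R) : R :=
  ((Num.sqrt (d + 2))^-1 - (Num.sqrt d)^-1) * (d / Num.sqrt q)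
  + 2 / (Num.sqrt (d + 2) * Num.sqrt 2).

Lemma inv_sqrt_shift_lt0 (d : R) : 0 < d -> (Num.sqrt (d + 2))^-1 - (Num.sqrt d)^-1 < 0.
Proof. by move=> d_gt0; rewrite subr_lt0 ltf_pV2 ?posrE ?sqrtr_gt0 ?ltr_sqrt //; lra. Qed.

Lemma inv_sqrt_le (x y : R) : 0 < x -> x <= y -> (Num.sqrt y)^-1 <= (Num.sqrt x)^-1.
Proof.
move=> x_gt0 le_xy; have y_gt0 := lt_le_trans x_gt0 le_xy.
by rewrite lef_pV2 ?posrE ?sqrtr_gt0 // ler_sqrt // ltW.
Qed.

Lemma inv_sqrt_inj (x y : R) : 0 <= x -> 0 <= y ->
  (Num.sqrt x)^-1 = (Num.sqrt y)^-1 -> x = y.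
Proof. by move=> x_ge0 y_ge0 /invr_inj /eqP; rewrite eqr_sqrt // => /eqP. Qed.

Lemma div_sqrtr (x : R) : 0 <= x -> x / Num.sqrt x = Num.sqrt x.
Proof.
move=> x_ge0; rewrite -{1}(sqr_sqrtr x_ge0) expr2.
by have [->|nz] := eqVneq (Num.sqrt x) 0; rewrite ?mul0r ?mulfK.
Qed.

Lemma cycle_gain2 (d : R) : 0 <= d ->
  cycle_gain d 2 = (Num.sqrt (d + 2) - Num.sqrt d) / Num.sqrt 2.
Proof.
move=> d_ge0; transitivity (((d + 2) / Num.sqrt (d + 2) - d / Num.sqrt d) / Num.sqrt 2).
  by rewrite /cycle_gain invfM; ring.
by rewrite !div_sqrtr // addr_ge0.
Qed.

Lemma cycle_gain_half_gap (d : R) : 0 < d ->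
  (d + 2) * (2^-1 - cycle_gain d (d + 2)) =
  (Num.sqrt d - Num.sqrt 2) * (2 * Num.sqrt (d + 2) - Num.sqrt d - Num.sqrt 2) / 2.
Proof.
move=> d_gt0; rewrite /cycle_gain.
set a := Num.sqrt (d + 2); set b := Num.sqrt d; set r := Num.sqrt 2.
have a_gt0 : 0 < a by rewrite sqrtr_gt0; lra.
have b_gt0 : 0 < b by rewrite sqrtr_gt0.
have r_gt0 : 0 < r by rewrite sqrtr_gt0.
have a2 : a ^+ 2 = d + 2 by rewrite sqr_sqrtr //; lra.
have b2 : b ^+ 2 = d by rewrite sqr_sqrtr // ltW.
have r2 : r ^+ 2 = 2 by rewrite sqr_sqrtr.
have -> : 2 / (a * r) = r / a by rewrite -{1}r2; field; rewrite !gt_eqF.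
rewrite -{1}a2 -b2.
have -> : a ^+ 2 * (2^-1 - ((a^-1 - b^-1) * (b ^+ 2 / a) + r / a)) =
          a ^+ 2 / 2 - b ^+ 2 + a * b - a * r.
  by field; rewrite !gt_eqF.
nra.
Qed.

Lemma cycle_gain_leif (d : R) : 2 <= d -> cycle_gain d (d + 2) <= 2^-1 ?= iff (d == 2).
Proof.
move=> d_ge2; have d_gt0 : 0 < d by lra.
have gap := cycle_gain_half_gap d_gt0.
have b_ge_r : Num.sqrt 2 <= Num.sqrt d by rewrite ler_sqrt // ltW.
have pos : 0 < 2 * Num.sqrt (d + 2) - Num.sqrt d - Num.sqrt 2.
  have : Num.sqrt d < Num.sqrt (d + 2) by rewrite ltr_sqrt; lra.
  have : Num.sqrt 2 < Num.sqrt (d + 2) by rewrite ltr_sqrt; lra.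
  lra.
have d2_gt0 : 0 < d + 2 by lra.
split.
  rewrite -subr_ge0 -(pmulr_rge0 _ d2_gt0) gap.
  by apply: divr_ge0 => //; apply: mulr_ge0; [rewrite subr_ge0 | exact: ltW].
rewrite eq_sym -subr_eq0 -(mulrI_eq0 _ (mulfI (lt0r_neq0 d2_gt0))) gap.
by rewrite !mulf_eq0 invr_eq0 (gt_eqF pos) pnatr_eq0 /= !orbF subr_eq0 eqr_sqrt // ltW.
Qed.

Lemma cycle_gain1_3_lt : cycle_gain 1 3 < 2^-1 + 75 / 1000.
Proof.
have := cycle_gain_half_gap ltr01; rewrite sqrtr1 (_ : 1 + 2 = 3) //.
set a := Num.sqrt 3; set r := Num.sqrt 2.
have a2 : a ^+ 2 = 3 by rewrite sqr_sqrtr.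
have r2 : r ^+ 2 = 2 by rewrite sqr_sqrtr.
have a_gt0 : 0 < a by rewrite sqrtr_gt0.
have r_gt0 : 0 < r by rewrite sqrtr_gt0.
(* (sqrt 2 - 1) (2 sqrt 3 - 1 - sqrt 2) < (5/12) (16/15) = 4/9 < 9/20 *)
have a_lb : 17 / 10 < a by nra.
have a_ub : a < 26 / 15 by nra.
have r_lb : 7 / 5 < r by nra.
have r_ub : r < 17 / 12 by nra.
nra.
Qed.

End CycleGain.

Section RandicAddCycleBounds.
Variable R : rcfType.
Variables (T : finType) (e : rel T) (v : T) (n : nat).
Hypothesis simple_e : simple_graph e.
Local Notation E := (add_cycle e v n.+3).
Let d : R := (deg e v)%:R.
Let slope : R := (Num.sqrt (d + 2))^-1 - (Num.sqrt d)^-1.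

Lemma sum_nbr_const (k : R) : \sum_(w | e v w) k = d * k.
Proof. by rewrite sumr_const card_deg mulr_natl. Qed.

Lemma slope_lt0 w : e v w -> slope < 0.
Proof.
move=> vw; apply: inv_sqrt_shift_lt0; rewrite ltr0n.
by apply/card_gt0P; exists w; rewrite inE.
Qed.

Lemma randic_add_cycle_sub_gain (q : R) :
  randic R E - randic R e - (cycle_gain d q + n.+1%:R / 2) =
  \sum_(w | e v w) slope * ((Num.sqrt (deg e w)%:R)^-1 - (Num.sqrt q)^-1).
Proof.
rewrite randic_add_cycleE // /cycle_gain -/d -/slope -mulr_sumr sumrB sum_nbr_const.
ring.
Qed.

Lemma randic_add_cycle_ge (q : nat) : (0 < q)%N ->
  (forall w, e v w -> q <= deg e w)%N ->
  cycle_gain d q%:R + n.+1%:R / 2 <= randic R E - randic R e.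
Proof.
move=> q_gt0 ge_q; rewrite -subr_ge0 randic_add_cycle_sub_gain.
apply: sumr_ge0 => w vw; apply: mulr_le0; first exact/ltW/(slope_lt0 vw).
by rewrite subr_le0 inv_sqrt_le ?ltr0n ?ler_nat ?ge_q.
Qed.

Lemma randic_add_cycle_le (q : nat) :
  (forall w, e v w -> deg e w <= q)%N ->
  randic R E - randic R e <= cycle_gain d q%:R + n.+1%:R / 2.
Proof.
have [_ sym_e] := simple_e.
move=> le_q; rewrite -subr_le0 randic_add_cycle_sub_gain.
apply: sumr_le0 => w vw; apply: mulr_le0_ge0; first exact/ltW/(slope_lt0 vw).
by rewrite subr_ge0 inv_sqrt_le ?ltr0n ?ler_nat ?le_q ?(deg_gt0 sym_e vw).
Qed.

Lemma randic_add_cycle_eq (q : nat) :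
  (forall w, e v w -> deg e w = q) ->
  randic R E - randic R e = cycle_gain d q%:R + n.+1%:R / 2.
Proof.
move=> eq_q; apply/eqP; rewrite -subr_eq0 randic_add_cycle_sub_gain.
by rewrite big1 // => w vw; rewrite eq_q // subrr mulr0.
Qed.

Lemma randic_add_cycle_eq_le (q : nat) :
  (forall w, e v w -> deg e w <= q)%N ->
  randic R E - randic R e = cycle_gain d q%:R + n.+1%:R / 2 ->
  forall w, e v w -> deg e w = q.
Proof.
have [_ sym_e] := simple_e.
move=> le_q /eqP; rewrite -subr_eq0 randic_add_cycle_sub_gain -oppr_eq0 -sumrN => /eqP sum0.
move=> w vw; have term_ge0 u : e v u ->
    0 <= - (slope * ((Num.sqrt (deg e u)%:R)^-1 - (Num.sqrt q%:R)^-1)).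
  move=> vu; rewrite oppr_ge0 mulr_le0_ge0 ?(ltW (slope_lt0 vu)) // subr_ge0.
  by rewrite inv_sqrt_le ?ltr0n ?ler_nat ?le_q ?(deg_gt0 sym_e vu).
move/eqP: (psumr_eq0P term_ge0 sum0 vw).
rewrite oppr_eq0 mulf_eq0 (lt_eqF (slope_lt0 vw)) subr_eq0 /=.
by move/eqP/inv_sqrt_inj; rewrite !ler0n => /(_ isT isT)/eqP; rewrite eqr_nat => /eqP.
Qed.

Lemma randic_add_cycle_le_half :
  (2 <= deg e v)%N -> (forall w, e v w -> deg e w <= deg e v + 2)%N ->
  randic R E - randic R e <= 2^-1 + n.+1%:R / 2 /\
  (randic R E - randic R e = 2^-1 + n.+1%:R / 2 <->
     deg e v = 2%N /\ forall w, e v w -> deg e w = 4%N).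
Proof.
move=> dv_ge2 nbr_le; have ub := randic_add_cycle_le nbr_le; rewrite natrD in ub.
have d_ge2 : 2 <= d by rewrite ler_nat.
have [gain_le gain_eq] := cycle_gain_leif d_ge2.
split; first by apply: le_trans ub _; rewrite lerD2r.
split=> [D_eq | [deg_v nbr4]].
  have gain_half : cycle_gain d (d + 2) = 2^-1.
    by apply/eqP; rewrite eq_le gain_le -(lerD2r (n.+1%:R / 2)) -D_eq.
  have deg_v : deg e v = 2%N by apply/eqP; rewrite -(eqr_nat R) -gain_eq gain_half.
  have nbr_eq := randic_add_cycle_eq_le nbr_le; rewrite natrD gain_half in nbr_eq.
  by split=> // w vw; rewrite (nbr_eq D_eq w vw) deg_v.
have d2 : d = 2 by rewrite /d deg_v.
have four : 4%:R = d + 2 by rewrite d2 -natrD.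
rewrite (randic_add_cycle_eq nbr4) four; congr (_ + _).
by apply/eqP; rewrite gain_eq d2.
Qed.

End RandicAddCycleBounds.

Theorem lemma2p7 (R : rcfType) (T : finType) (e : rel T) (v : T) (s : nat) :
  simple_graph e -> (3 <= s)%N ->
  let D : R := randic R (add_cycle e v s) - randic R e in
  let dv : R := (deg e v)%:R in
  (* (1) *)
  ((forall w, e v w -> (2 <= deg e w)%N) ->
     D >= (Num.sqrt (dv + 2) - Num.sqrt dv) / Num.sqrt 2 + (s%:R - 2) / 2 /\
     ((forall w, e v w -> deg e w = 2%N) ->
        D = (Num.sqrt (dv + 2) - Num.sqrt dv) / Num.sqrt 2 + (s%:R - 2) / 2))
  /\
  (* (2) *)
  ((2 <= deg e v)%N -> (forall w, e v w -> (deg e w <= deg e v + 2)%N) ->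
     D <= (s%:R - 1) / 2 /\
     (D = (s%:R - 1) / 2 <-> deg e v = 2%N /\ forall w, e v w -> deg e w = 4%N))
  /\
  (* (3) *)
  (deg e v = 1%N -> (forall w, e v w -> (2 <= deg e w <= 3)%N) ->
     D < (s%:R - 1) / 2 + 75 / 1000).
Proof.
move=> simple_e; case: s => [|[|[|n]]] // _ D dv.
have -> : (n.+3%:R - 2) / 2 = n.+1%:R / 2 :> R by rewrite -addn2 natrD addrK.
have -> : (n.+3%:R - 1) / 2 = 2^-1 + n.+1%:R / 2 :> R by rewrite -addn2 natrD; lra.
split; [|split].
- move=> nbr_ge2; rewrite -cycle_gain2 ?ler0n //; split.
    exact: randic_add_cycle_ge.
  exact: randic_add_cycle_eq.
- exact: randic_add_cycle_le_half.
- move=> deg_v nbr23.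
  have ub := randic_add_cycle_le R n simple_e (q := 3) (fun w vw => proj2 (andP (nbr23 w vw))).
  rewrite -/D deg_v in ub; have := cycle_gain1_3_lt R; lra.
Qed.
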